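(* Let $S$ be a complex Enriques surface, $\pi:\tilde S\to S$ its K3 cover with covering involution $\varepsilon$, $N=(H^2(\tilde S,\mathbb{Z})^{\varepsilon})^{\perp}\subset H^2(\tilde S,\mathbb{Z})$, $f\in\mathrm{Aut}(S)$ with a lift $\tilde f\in\mathrm{Aut}(\tilde S)$, $f_N=\tilde f^*|_N$, and let $p_N(x)=\det(xI-f_N)$ be the characteristic polynomial of $f_N$. Then: (a) the reduction of $p_N(x)$ modulo $2$ is divisible by $x^2+1=(x+1)^2$ in $\mathbb{F}_2[x]$; (b) $p_N(1)\,p_N(-1)$ is either zero or a square in $\mathbb{Q}^*$.
   Context: $N$ is a lattice of rank 12 isomorphic to $U\oplus U(2)\oplus E_8(2)$; $\tilde f^*$ preserves $N$ since $\tilde f$ commutes with $\varepsilon$. *)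

From HB Require Import structures.
From mathcomp Require Import all_boot all_order all_algebra.
Set Implicit Arguments. Unset Strict Implicit. Unset Printing Implicit Defensive.
Import Order.TTheory GRing.Theory Num.Theory.
Local Open Scope ring_scope.

Definition e8_edge (a b : nat) : bool :=
  [|| (a.+1 == b)%N && (b <= 6)%N, (b.+1 == a)%N && (a <= 6)%N,
      (a == 4%N) && (b == 7%N) | (a == 7%N) && (b == 4%N)].

(* Entries of the negative definite E8 lattice E8(-1) (minus the Cartan matrix). *)
Definition e8_entry (a b : nat) : int :=
  if a == b then (-2)%R else if e8_edge a b then 1%R else 0%R.

(* Gram matrix of N = U + U(2) + E8(2) in a standard basis of Z^12:
   indices 0,1 : U ; 2,3 : U(2) ; 4..11 : E8(2) (= 2 * E8(-1) as in the K3 convention). *)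
Definition gramN_entry (i j : nat) : int :=
  if (i < 2)%N && (j < 2)%N then (if i == j then 0 else 1)%R
  else if (2 <= i < 4)%N && (2 <= j < 4)%N then (if i == j then 0 else 2)%R
  else if (4 <= i)%N && (4 <= j)%N then (2 * e8_entry (i - 4) (j - 4))%R
  else 0%R.

Definition gramN : 'M[int]_12 := \matrix_(i, j) gramN_entry i j.

Definition isometryN (M : 'M[int]_12) : Prop := M^T *m gramN *m M = gramN.

Definition red2 (p : {poly int}) : {poly 'F_2} := map_poly (fun z : int => z%:~R) p.

(* (a) Modulo 2 the Gram matrix of N is that of U, all other summands lying in
   the radical.  Hence the reduction of f_N preserves the radical, so it is block
   triangular, and its block on U/2U is invertible.  Since N is even, f_N also
   preserves the quadratic form x.x/2, which is x_0 x_1 modulo 2; so the images of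
   the isotropic vectors e_0, e_1 are isotropic, and over F_2 this forces the
   block on U/2U to be the identity or the swap, with characteristic polynomial
   (x + 1)^2.
   (b) With G the Gram matrix and M = f_N, S = G M - M^T G is skew-symmetric, so
   det S is a square, and S M = G (1 - M) (-1 - M).  If p_N(1) <> 0 then
   det M = (-1)^12 = 1, and det G = 32^2, so p_N(1) p_N(-1) = det S / 32^2. *)

From HB Require Import structures.
From mathcomp Require Import all_boot all_order all_algebra perm.
From mathcomp Require Import ring zify.
Set Implicit Arguments. Unset Strict Implicit. Unset Printing Implicit Defensive.
Import Order.TTheory GRing.Theory Num.Theory.
Local Open Scope ring_scope.

Lemma det_mx2 (R : comNzRingType) (A : 'M[R]_2) :
  \det A = A 0 0 * A 1 1 - A 0 1 * A 1 0.
Proof.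
have lift01 : lift 0 0 = 1 :> 'I_2 by apply: val_inj.
have lift10 : lift 1 0 = 0 :> 'I_2 by apply: val_inj.
rewrite (expand_det_row _ 0) !big_ord_recl big_ord0 addr0 /cofactor !det_mx11.
by rewrite !mxE /= lift01 lift10 expr0 expr1 !mul1r mulN1r mulrN.
Qed.

Lemma char_poly_mx2 (R : comNzRingType) (A : 'M[R]_2) :
  char_poly A = 'X^2 - (\tr A)%:P * 'X + (\det A)%:P.
Proof.
have lift01 : lift 0 0 = 1 :> 'I_2 by apply: val_inj.
rewrite /char_poly /mxtrace !big_ord_recl big_ord0 addr0 !det_mx2 !mxE /= lift01.
rewrite mulr1n mulr0n polyCD polyCB !polyCM.
ring.
Qed.

Lemma char_poly_lblock (R : comNzRingType) m n (A : 'M[R]_m) (C : 'M[R]_(n, m)) D :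
  char_poly (block_mx A 0 C D) = char_poly A * char_poly D.
Proof.
rewrite /char_poly /char_poly_mx map_block_mx map_mx0 (scalar_mx_block m n).
by rewrite opp_block_mx oppr0 add_block_mx addr0 det_lblock.
Qed.

Lemma horner_char_poly (R : comNzRingType) n (A : 'M[R]_n) a :
  (char_poly A).[a] = \det (a%:M - A).
Proof.
rewrite -horner_evalE /char_poly -det_map_mx; congr (\det _).
by apply/matrixP => i j; rewrite !mxE rmorphB rmorphMn /= !horner_evalE hornerX hornerC.
Qed.

Lemma det_xcol (R : comNzRingType) n (A : 'M[R]_n) i j :
  i != j -> \det (xcol i j A) = - \det A.
Proof.
by move=> ij; rewrite xcolE det_mulmx det_perm odd_tperm ij expr1 mulrN1.
Qed.

Lemma det_block_schur (F : fieldType) m n (A : 'M[F]_m) B C (D : 'M[F]_n) :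
  A \in unitmx -> \det (block_mx A B C D) = \det A * \det (D - C *m invmx A *m B).
Proof.
move=> uA.
have -> : block_mx A B C D
    = block_mx 1%:M 0 (C *m invmx A) 1%:M *m block_mx A B 0 (D - C *m invmx A *m B).
  rewrite mulmx_block !mul1mx !mul0mx !addr0 -mulmxA mulVmx // mulmx1.
  by rewrite addrCA subrr addr0.
by rewrite det_mulmx det_lblock det_ublock !det1 !mul1r.
Qed.

Section SkewSymmetric.

Variable F : fieldType.
Hypothesis two_neq0 : (2 : F) != 0.

Lemma skew_mx_diag n (S : 'M[F]_n) i : S^T = - S -> S i i = 0.
Proof.
move=> /matrixP /(_ i i); rewrite !mxE => /eqP.
by rewrite -addr_eq0 -mulr2n -mulr_natr mulf_eq0 (negPf two_neq0) orbF => /eqP.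
Qed.

Lemma det_skew_schur m (S : 'M[F]_(2 + m)) : S^T = - S -> S 0 1 != 0 ->
  exists2 S' : 'M[F]_m, S'^T = - S' & \det S = S 0 1 ^+ 2 * \det S'.
Proof.
have -> : S 0 1 = ulsubmx S 0 1 by rewrite !mxE; f_equal; apply: val_inj.
set A := ulsubmx S; set B := ursubmx S; set C := dlsubmx S; set D := drsubmx S.
rewrite -[S]submxK tr_block_mx opp_block_mx => /eq_block_mx [skA BC CB skD] a0.
have detA : \det A = A 0 1 ^+ 2.
  rewrite det_mx2 !skew_mx_diag // mul0r sub0r.
  by move/matrixP: skA => /(_ 0 1); rewrite !mxE => ->; rewrite mulrN opprK expr2.
have uA : A \in unitmx by rewrite unitmxE detA unitfE expf_neq0.
exists (D - C *m invmx A *m B); last by rewrite det_block_schur // detA.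
have invN : invmx (- A) = - invmx A.
  by rewrite -scaleN1r invmxZ ?unitmxZ ?unitrN1 // invrN1 scaleN1r.
rewrite raddfB /= !trmx_mul trmx_inv skA BC CB skD invN.
by rewrite !mulNmx !mulmxN !opprK opprB addrC mulmxA.
Qed.

Lemma det_skew_sqr n (S : 'M[F]_n) : S^T = - S -> exists c, \det S = c ^+ 2.
Proof.
elim/ltn_ind: n S => -[|[|m]] IH S skS.
- by exists 1; rewrite det_mx00 expr1n.
- by exists 0; rewrite det_mx11 skew_mx_diag // expr0n.
have [j Sj|S0] := pickP (fun j => S 0 j != 0); last first.
  exists 0; rewrite expr0n (expand_det_row _ 0) big1 // => j _.
  by move/negbFE/eqP: (S0 j) => ->; rewrite mul0r.
have j0 : j != 0 by apply: contraNneq Sj => ->; rewrite skew_mx_diag.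
pose P : 'M[F]_(2 + m) := tperm_mx 1 j.
pose T := P *m S *m P.
have skT : T^T = - T by rewrite !trmx_mul tr_tperm_mx skS mulNmx mulmxN mulmxA.
have detT : \det T = \det S.
  by rewrite !det_mulmx det_perm mulrC mulrA -signr_addb addbb mul1r.
have T01 : T 0 1 = S 0 j by rewrite /T /P -xrowE -xcolE !mxE tpermL tpermD.
rewrite -T01 in Sj; have [S' skS' detS'] := det_skew_schur skT Sj.
have [c detc] := IH m (ltnW (ltnSn _)) S' skS'.
by exists (S 0 j * c); rewrite -detT detS' T01 detc exprMn.
Qed.

End SkewSymmetric.

Section Pivots.

Variable F : fieldType.
Implicit Type f : nat -> nat -> F.

Definition schur_step f i j := f i.+1 j.+1 - f i.+1 0%N * f 0%N j.+1 / f 0%N 0%N.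

(* Without this memoisation every elimination step would recompute all the
   previous ones, and evaluating [pivots] would take exponential time. *)
Definition tabulate n f : nat -> nat -> F :=
  let t := mkseq (fun i => mkseq (f i) n) n in fun i j => nth 0 (nth [::] t i) j.

Fixpoint pivots n f : seq F :=
  if n is n'.+1 then f 0%N 0%N :: pivots n' (tabulate n' (schur_step f)) else [::].

Lemma det_schur_step n f : f 0%N 0%N != 0 ->
  \det (\matrix_(i, j < n.+1) f i j) = f 0%N 0%N * \det (\matrix_(i, j < n) schur_step f i j).
Proof.
move=> f00; set A : 'M_(1 + n) := \matrix_(i, j) f i j.
have ulA : ulsubmx A = (f 0%N 0%N)%:M by apply/matrixP => i j; rewrite !ord1 !mxE.
rewrite -[A]submxK (@det_block_schur _ 1 n) ulA ?unitmxE ?det_scalar1 ?unitfE //.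
rewrite invmx_scalar; congr (_ * \det _); apply/matrixP => i j.
by rewrite mul_mx_scalar -scalemxAl !mxE big_ord1 !mxE mulrC.
Qed.

Lemma det_pivots n f : all (fun p => p != 0) (pivots n f) ->
  \det (\matrix_(i, j < n) f i j) = \prod_(p <- pivots n f) p.
Proof.
elim: n f => [|n IH] f /=; first by rewrite det_mx00 big_nil.
case/andP => f00 nz; rewrite big_cons det_schur_step // -IH //; congr (_ * \det _).
by apply/matrixP => i j; rewrite !mxE /tabulate !nth_mkseq.
Qed.

End Pivots.

Lemma isometry_radical_block (F : fieldType) m n (J : 'M[F]_m) (M : 'M[F]_(m + n)) :
  J \in unitmx -> M^T *m block_mx J 0 0 0 *m M = block_mx J 0 0 0 ->
  ulsubmx M \in unitmx /\ ursubmx M = 0.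
Proof.
set A := ulsubmx M; set B := ursubmx M => uJ.
rewrite -[M]submxK tr_block_mx !mulmx_block !(mulmx0, mul0mx, addr0).
move=> /eq_block_mx [isoA isoB _ _].
have uA : A \in unitmx.
  by move: uJ; rewrite !unitmxE -isoA !det_mulmx det_tr !unitrM => /andP [].
split=> //; have uAJ : A^T *m J \in unitmx by rewrite unitmx_mul unitmx_tr uA.
by rewrite -(mulKmx uAJ B) isoB mulmx0.
Qed.

Section Isometry.

Variables (F : fieldType) (n : nat) (G M : 'M[F]_n).
Hypothesis isoM : M^T *m G *m M = G.

Lemma det_isometry_sign : \det G != 0 -> \det (1%:M - M) != 0 -> \det M = (-1) ^+ n.
Proof.
move=> G0 P0.
have : (1%:M - M)^T *m G *m M = G *m ((-1) *: (1%:M - M)).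
  by rewrite raddfB /= tr_scalar_mx !mulmxBl mul1mx isoM scaleN1r mulmxN mulmxBr mulmx1 opprB.
move/(congr1 determinant); rewrite !det_mulmx det_tr detZ [RHS]mulrCA mulrC.
by rewrite [\det G * _]mulrC => /(mulIf (mulf_neq0 P0 G0)).
Qed.

Lemma isometry_skew_mulmx :
  (G *m M - M^T *m G) *m M = G *m ((1%:M - M) *m ((-1)%:M - M)).
Proof.
rewrite mulmxBl isoM -mulmxA raddfN /= mulmxBl mul1mx !mulmxBr !mulmxN mulmx1.
by rewrite opprB opprK mulmx1 addrACA addNr addr0 addrC.
Qed.

Hypothesis two_neq0 : (2 : F) != 0.

Lemma isometry_char_poly_pm1_sqr g : ~~ odd n -> G^T = G -> \det G = g ^+ 2 -> g != 0 ->
  exists c, (char_poly M).[1] * (char_poly M).[-1] = c ^+ 2.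
Proof.
move=> evn symG detG g0; rewrite !horner_char_poly.
have [P0|P0] := eqVneq (\det (1%:M - M)) 0; first by exists 0; rewrite P0 mul0r expr0n.
have detM : \det M = 1.
  by rewrite det_isometry_sign ?detG ?expf_neq0 // -signr_odd (negPf evn).
have skS : (G *m M - M^T *m G)^T = - (G *m M - M^T *m G).
  by rewrite raddfB /= !trmx_mul symG trmxK opprB.
have [c detS] := det_skew_sqr two_neq0 skS.
exists (c / g); rewrite expr_div_n -detS.
have := congr1 determinant isometry_skew_mulmx.
by rewrite !det_mulmx detM mulr1 detG => ->; rewrite [RHS]mulrC mulKf ?expf_neq0.
Qed.

End Isometry.

Lemma F2_cases (x : 'F_2) : x = 0 \/ x = 1.
Proof. by case: x => -[|[|//]] ?; [left | right]; apply: val_inj. Qed.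

Lemma char_poly_F2_isotropic (A : 'M['F_2]_2) :
  A \in unitmx -> (forall k, A 0 k * A 1 k = 0) -> char_poly A = 'X^2 + 1.
Proof.
move=> uA isoA.
suff /andP [/eqP tr0 /eqP det1] : (\tr A == 0) && (\det A == 1).
  by rewrite char_poly_mx2 tr0 det1 polyC0 mul0r subr0 polyC1.
have lift01 : lift 0 0 = 1 :> 'I_2 by apply: val_inj.
move: uA (isoA 0) (isoA 1).
rewrite unitmxE unitfE det_mx2 /mxtrace !big_ord_recl big_ord0 addr0 /= lift01.
case/F2_cases: (A 0 0) => ->; case/F2_cases: (A 0 1) => ->;
  case/F2_cases: (A 1 0) => ->; case/F2_cases: (A 1 1) => ->.
all: by move=> + /eqP + /eqP; vm_compute.
Qed.

(* The hyperbolic planes U and U(2) have zero diagonal: swapping their basis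
   vectors makes all the pivots of the Gram matrix nonzero. *)
Definition swap_hyperbolic (j : nat) : nat :=
  if (j < 4)%N then (if odd j then j.-1 else j.+1) else j.

Lemma tperm_hyperbolicE (j : 'I_12) : tperm 2 3 (tperm 0 1 j) = swap_hyperbolic j :> nat.
Proof. by case: j => -[|[|[|[|j]]]] ?; rewrite !permE. Qed.

Lemma det_gramN : \det (map_mx intr gramN : 'M[rat]_12) = 32 ^+ 2.
Proof.
rewrite -[LHS]opprK -(det_xcol _ (_ : 2 != 3)) // -(det_xcol _ (_ : 0 != 1)) //.
pose f i j : rat := (gramN_entry i (swap_hyperbolic j))%:~R.
have -> : xcol 0 1 (xcol 2 3 (map_mx intr gramN)) = \matrix_(i, j < 12) f i j.
  by apply/matrixP => i j; rewrite !mxE tperm_hyperbolicE.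
by rewrite det_pivots ?unlock; vm_compute.
Qed.

Lemma e8_edgeC a b : e8_edge a b = e8_edge b a.
Proof.
rewrite /e8_edge orbCA (andbC (b == 4%N)) (andbC (b == 7%N)).
by rewrite [_ && _ || _ && _]orbC.
Qed.

Lemma gramN_sym : gramN^T = gramN.
Proof.
apply/matrixP => i j; rewrite !mxE /gramN_entry /e8_entry e8_edgeC.
by rewrite (andbC (j < 2)%N) (andbC (1 < j < 4)%N) (andbC (3 < j)%N)
  !(eq_sym (j : nat)) (eq_sym (j - 4)%N).
Qed.

Definition gramU2 : 'M['F_2]_2 := \matrix_(i, j) (i != j)%:R.

Lemma unitmx_gramU2 : gramU2 \in unitmx.
Proof. by rewrite unitmxE unitfE det_mx2 !mxE; vm_compute. Qed.

Lemma gramN_entry_mod2 i j :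
  (gramN_entry i j)%:~R = [&& i < 2, j < 2 & i != j]%N%:R :> 'F_2.
Proof.
have two0 : 2%:~R = 0 :> 'F_2 by apply: val_inj.
rewrite /gramN_entry; case: i j => [|[|i]] [|[|j]] //=; rewrite ?andbF //.
by do 2!case: ifP => _; rewrite ?intrM ?two0 ?mul0r.
Qed.

Lemma gramN_mod2 : map_mx intr gramN = block_mx gramU2 0 0 0 :> 'M['F_2]_(2 + 10).
Proof.
apply/matrixP => i j.
case: (split_ordP i) => {}i ->; case: (split_ordP j) => {}j ->;
  rewrite ?(block_mxEul, block_mxEur, block_mxEdl, block_mxEdr) !mxE gramN_entry_mod2 /=;
  by rewrite ?ltn_ord ?andbF.
Qed.

(* The witness [r] is x_2 x_3 (from U(2)) plus half the E8(-1) form. *)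
Lemma gramN_quad_form (x : nat -> int) : exists r,
  \sum_(0 <= b < 12) (\sum_(0 <= a < 12) x a * gramN_entry a b) * x b =
  2 * (x 0%N * x 1%N) + 4 * r.
Proof.
exists (x 2%N * x 3%N
  - (x 4%N ^+ 2 + x 5%N ^+ 2 + x 6%N ^+ 2 + x 7%N ^+ 2
     + x 8%N ^+ 2 + x 9%N ^+ 2 + x 10%N ^+ 2 + x 11%N ^+ 2)
  + (x 4%N * x 5%N + x 5%N * x 6%N + x 6%N * x 7%N + x 7%N * x 8%N
     + x 8%N * x 9%N + x 9%N * x 10%N + x 8%N * x 11%N)).
rewrite !big_nat_recr ?big_geq //= /gramN_entry /e8_entry /e8_edge /=.
ring.
Qed.

Lemma isometryN_col_isotropic fN (k : 'I_12) : isometryN fN -> (k < 2)%N ->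
  (fN 0 k * fN 1 k)%:~R = 0 :> 'F_2.
Proof.
move=> iso k_lt2; pose x a := fN (inord a) k.
have [r qx] := gramN_quad_form x.
have x01 : x 0%N * x 1%N = fN 0 k * fN 1 k.
  by rewrite /x; congr (fN _ _ * fN _ _); apply: val_inj; rewrite /= inordK.
have qfN : (fN^T *m gramN *m fN) k k = 2 * (fN 0 k * fN 1 k) + 4 * r.
  rewrite -x01 -qx mxE big_mkord; apply: eq_bigr => b _.
  rewrite big_mkord !mxE /x inord_val; congr (_ * _).
  by apply: eq_bigr => a _; rewrite !mxE inord_val.
have : fN 0 k * fN 1 k = 2 * - r.
  by move: qfN; rewrite iso mxE /gramN_entry k_lt2 /= eqxx; lia.
have two0 : 2%:~R = 0 :> 'F_2 by apply: val_inj.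
by move=> ->; rewrite intrM two0 mul0r.
Qed.

Lemma isometryN_char_poly_mod2 fN : isometryN fN ->
  ('X^2 + 1 : {poly 'F_2}) %| red2 (char_poly fN).
Proof.
move=> iso; pose M : 'M['F_2]_(2 + 10) := map_mx intr fN.
have isoM : M^T *m block_mx gramU2 0 0 0 *m M = block_mx gramU2 0 0 0.
  by rewrite -gramN_mod2 /M map_trmx -!map_mxM iso.
have [uA B0] := isometry_radical_block unitmx_gramU2 isoM.
have isoA k : ulsubmx M 0 k * ulsubmx M 1 k = 0.
  have lshift0 : lshift 10 (0 : 'I_2) = 0 by apply: val_inj.
  have lshift1 : lshift 10 (1 : 'I_2) = 1 by apply: val_inj.
  rewrite !mxE lshift0 lshift1 -intrM.
  exact: (@isometryN_col_isotropic _ (lshift 10 k) iso (ltn_ord k)).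
have -> : red2 (char_poly fN) = char_poly M by exact: map_char_poly.
rewrite -[M]submxK B0 char_poly_lblock.
by rewrite char_poly_F2_isotropic // dvdp_mulIl.
Qed.

Lemma isometryN_char_poly_pm1 fN : isometryN fN ->
  exists c : rat, ((char_poly fN).[1] * (char_poly fN).[-1])%:~R = c ^+ 2.
Proof.
move=> iso; pose M : 'M[rat]_12 := map_mx intr fN.
have isoM : M^T *m map_mx intr gramN *m M = map_mx intr gramN.
  by rewrite /M map_trmx -!map_mxM iso.
have symG : (map_mx intr gramN)^T = map_mx intr gramN :> 'M[rat]_12.
  by rewrite map_trmx gramN_sym.
have [c hc] := isometry_char_poly_pm1_sqr isoM isT isT symG det_gramN isT.
by exists c; rewrite intrM -!horner_map /= map_char_poly rmorphN1 hc.
Qed.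

Theorem lemma2p2 (fN : 'M[int]_12) :
  isometryN fN ->
  let pN := char_poly fN in
  (('X^2 + 1 : {poly 'F_2}) %| red2 pN)%R /\
  (pN.[1] * pN.[-1] = 0 \/
   exists q : rat, q != 0 /\ (pN.[1] * pN.[-1])%:~R = q ^+ 2).
Proof.
move=> iso pN; split; first exact: isometryN_char_poly_mod2.
have [c hc] := isometryN_char_poly_pm1 iso.
have [->|nz] := eqVneq (pN.[1] * pN.[-1]) 0; [by left | right].
exists c; split=> //; apply: contra_neq nz => c0.
by apply/eqP; rewrite -(intr_eq0 rat) hc c0 expr0n.
Qed.
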